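(* Let $S$ be a commutative semigroup and $H$ a subsemigroup of $S$. Suppose $p$ is a monoid congruence on $S$ such that $H$ is (the congruence class that is) the identity element of $S/p$. Let $\{H_i : i\in I\}$ be the family of all subsets $H_i$ of $S$ satisfying $H\subseteq \mathrm{Sep}\,H_i$. Then $$P(H;H_i,I)\subseteq p\subseteq P_H,$$ where $P(H;H_i,I)=\{(a,b)\in S\times S:\ H_i\dots a=H_i\dots b \text{ for all } i\in I\}$ and $P_H=\{(a,b)\in S\times S:\ H\dots a=H\dots b\}$.
   Context: For a semigroup $S$ and $A\subseteq S$, $\mathrm{Sep}\,A$ (the separator of $A$) is the set of all $x\in S$ with $xA\subseteq A$, $Ax\subseteq A$, $x(S\setminus A)\subseteq S\setminus A$ and $(S\setminus A)x\subseteq S\setminus A$. For $A\subseteq S$ and $a\in S$, $A\dots a=\{(x,y)\in S\times S:\ xay\in A\}$. A congruence $p$ on $S$ is a monoid congruence if the factor semigroup $S/p$ has an identity element. *)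

Section Defs.
Context {T : Type} (op : T -> T -> T).

Definition associative := forall x y z, op x (op y z) = op (op x y) z.
Definition commutative := forall x y, op x y = op y x.

Definition subsemigroup (H : T -> Prop) :=
  (exists h, H h) /\ forall x y, H x -> H y -> H (op x y).

Definition Sep (A : T -> Prop) (x : T) : Prop :=
  (forall a, A a -> A (op x a)) /\ (forall a, A a -> A (op a x)) /\
  (forall a, ~ A a -> ~ A (op x a)) /\ (forall a, ~ A a -> ~ A (op a x)).

Definition dots (A : T -> Prop) (a : T) (x y : T) : Prop := A (op (op x a) y).

Definition releq (R1 R2 : T -> T -> Prop) := forall x y, R1 x y <-> R2 x y.

Definition congruence (p : T -> T -> Prop) :=
  (forall x, p x x) /\ (forall x y, p x y -> p y x) /\
  (forall x y z, p x y -> p y z -> p x z) /\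
  (forall x y z, p x y -> p (op z x) (op z y) /\ p (op x z) (op y z)).

(* The p-class H is the identity element of S/p (so p is a monoid congruence) *)
Definition identity_class (p : T -> T -> Prop) (H : T -> Prop) :=
  (exists h, forall x, H x <-> p h x) /\
  (forall h x, H h -> p (op h x) x /\ p (op x h) x).

Definition P_fam (H : T -> Prop) (a b : T) : Prop :=
  forall A : T -> Prop, (forall h, H h -> Sep A h) -> releq (dots A a) (dots A b).

Definition P_H (H : T -> Prop) (a b : T) : Prop := releq (dots H a) (dots H b).

End Defs.


(* Multiplying by an element of H does not change the p-class of an element,
   so H lies in the separator of every p-class. Taking that class as the test set in P(H; H_i, I) and the
   contexts x = y = h in H shows that P(H; H_i, I) is contained in p.
   Conversely H is itself a p-class, so compatibility of p with x _ y
   gives p inside P_H. *)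

Section IdentityClass.

Variables (T : Type) (op : T -> T -> T) (H : T -> Prop) (p : T -> T -> Prop).
Hypothesis p_congruence : congruence op p.
Hypothesis H_identity : identity_class op p H.

Lemma congruence_trans x y z : p x y -> p y z -> p x z.
Proof. destruct p_congruence as [_ [_ [Ht _]]]; exact (Ht x y z). Qed.

Lemma congruence_sym x y : p x y -> p y x.
Proof. destruct p_congruence as [_ [Hs _]]; exact (Hs x y). Qed.

Lemma congruence_context a b x y :
  p a b -> p (op (op x a) y) (op (op x b) y).
Proof.
destruct p_congruence as [_ [_ [_ Hc]]]; intros Hab.
exact (proj2 (Hc _ _ y (proj1 (Hc a b x Hab)))).
Qed.

Lemma identity_class_mull g x : H g -> p (op g x) x.
Proof. intros Hg; exact (proj1 (proj2 H_identity g x Hg)). Qed.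

Lemma identity_class_mulr g x : H g -> p (op x g) x.
Proof. intros Hg; exact (proj2 (proj2 H_identity g x Hg)). Qed.

Lemma identity_class_closed x y : p x y -> H x -> H y.
Proof.
destruct H_identity as [[h0 Hh0] _]; intros Hxy Hx.
apply Hh0; apply Hh0 in Hx; exact (congruence_trans _ _ _ Hx Hxy).
Qed.

Lemma identity_class_sep_class a g : H g -> Sep op (p a) g.
Proof.
intros Hg; repeat split; intros x Hx.
- exact (congruence_trans _ _ _ Hx (congruence_sym _ _ (identity_class_mull g x Hg))).
- exact (congruence_trans _ _ _ Hx (congruence_sym _ _ (identity_class_mulr g x Hg))).
- intros Hgx; apply Hx; exact (congruence_trans _ _ _ Hgx (identity_class_mull g x Hg)).
- intros Hxg; apply Hx; exact (congruence_trans _ _ _ Hxg (identity_class_mulr g x Hg)).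
Qed.

Lemma identity_class_sandwich h c : H h -> p (op (op h c) h) c.
Proof.
intros Hh; apply (congruence_trans _ (op h c)).
- exact (identity_class_mulr h (op h c) Hh).
- exact (identity_class_mull h c Hh).
Qed.

Lemma P_fam_sub_congruence a b : (exists h, H h) -> P_fam op H a b -> p a b.
Proof.
intros [h Hh] Hab.
assert (Hclass : dots op (p a) b h h).
{ apply (Hab (p a) (identity_class_sep_class a)).
  exact (congruence_sym _ _ (identity_class_sandwich h a Hh)). }
exact (congruence_trans _ _ _ Hclass (identity_class_sandwich h b Hh)).
Qed.

Lemma congruence_sub_P_H a b : p a b -> P_H op H a b.
Proof.
intros Hab x y; split; apply identity_class_closed.
- exact (congruence_context a b x y Hab).
- exact (congruence_sym _ _ (congruence_context a b x y Hab)).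
Qed.

End IdentityClass.

Theorem theorem4 (T : Type) (op : T -> T -> T)
  (Hassoc : associative op) (Hcomm : commutative op)
  (H : T -> Prop) (Hsub : subsemigroup op H)
  (p : T -> T -> Prop) (Hcong : congruence op p) (Hid : identity_class op p H) :
  (forall a b, P_fam op H a b -> p a b) /\ (forall a b, p a b -> P_H op H a b).
Proof.
split.
- intros a b; exact (P_fam_sub_congruence T op H p Hcong Hid a b (proj1 Hsub)).
- exact (congruence_sub_P_H T op H p Hcong Hid).
Qed.
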